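(* For every integer $n\geq 7$ there exist trees $T_1$ and $T_2$ on $n$ vertices such that $\psi(T_1)=\psi(T_2)$ but $T_1$ and $T_2$ are not isomorphic.
   Context: All graphs are finite, simple and nonempty. For a graph $G$ and a positive integer $k$, a $k$-path vertex cover ($k$-PVC) of $G$ is a set $S$ of vertices such that every path on $k$ vertices in $G$ contains at least one vertex of $S$ (if $G$ has no path on $k$ vertices, the empty set is a $k$-PVC). $\psi_k(G)$ denotes the minimum cardinality of a $k$-PVC of $G$. For a graph $G$ on $n$ vertices, the path sequence of $G$ is $\psi(G)=(\psi_1(G),\psi_2(G),\ldots,\psi_n(G))$. *)

From mathcomp Require Import all_boot.
Set Implicit Arguments. Unset Strict Implicit. Unset Printing Implicit Defensive.

Section Graphs.
Variable T : finType.

Definition simple_graph (e : rel T) : Prop :=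
  symmetric e /\ irreflexive e.

Definition is_gpath (e : rel T) (s : seq T) : bool :=
  if s is x :: p then path e x p && uniq s else false.

Definition is_gcycle (e : rel T) (s : seq T) : bool :=
  [&& 3 <= size s, uniq s & cycle e s].

Definition connected_graph (e : rel T) : Prop := forall x y : T, connect e x y.

Definition acyclic_graph (e : rel T) : Prop := forall s : seq T, ~~ is_gcycle e s.

Definition is_tree (e : rel T) : Prop :=
  simple_graph e /\ connected_graph e /\ acyclic_graph e.

(* S is a k-path vertex cover: every path on k vertices meets S. *)
Definition is_kpvc (e : rel T) (k : nat) (S : {set T}) : bool :=
  [forall t : k.-tuple T, is_gpath e t ==> has (fun x => x \in S) t].

(* psi_k(G): minimum cardinality of a k-PVC (setT is always one). *)
Definition psi (e : rel T) (k : nat) : nat :=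
  \big[minn/#|T|]_(S : {set T} | is_kpvc e k S) #|S|.

End Graphs.

Definition isomorphic (T1 T2 : finType) (e1 : rel T1) (e2 : rel T2) : Prop :=
  exists f : T1 -> T2, bijective f /\ forall x y, e1 x y = e2 (f x) (f y).

From mathcomp Require Import all_boot zify.
Set Implicit Arguments. Unset Strict Implicit. Unset Printing Implicit Defensive.

(* Take the path 3 - 1 - 0 - 2, hang the leaves 5, ..., n - 1 (at least two of
   them) on 2, and hang one more leaf 4 either on 2 or on 1.  In both trees the
   vertices of degree at least two lie on the spine 1 - 0 - 2, so every edge
   meets {1, 2}, every path on four vertices passes through 0 and no path has
   six vertices; the disjoint paths 3 - 1 - 0 and 5 - 2 - 6 and the path
   3 - 1 - 0 - 2 - 5 show that these covers are optimal.  Hence both trees have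
   path sequence (n, 2, 2, 1, 1, 0, ..., 0).  They are not isomorphic: only the
   first one has a leaf, namely 3, whose neighbour has degree two. *)

Lemma bigminn_le (I : eqType) (r : seq I) (P : pred I) (F : I -> nat) x0 j :
  j \in r -> P j -> \big[minn/x0]_(i <- r | P i) F i <= F j.
Proof.
elim: r => //= i r IHr; rewrite inE big_cons => /orP[/eqP<- -> | jr Pj].
  exact: geq_minl.
by case: (P i); [apply: leq_trans (geq_minr _ _) _|]; apply: IHr.
Qed.

Section PathsAndCovers.
Variables (T : finType) (e : rel T).

Lemma gpath_behead x y s : is_gpath e [:: x, y & s] -> is_gpath e (y :: s).
Proof. by case/andP=> /andP[_ ys] /andP[_ ys_uniq]; apply/andP. Qed.

Lemma gpath_inner x y z s : symmetric e ->
  is_gpath e [:: x, y, z & s] -> [/\ e y x, e y z & x != z].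
Proof.
move=> e_sym /andP[/and3P[exy eyz _] /and3P[xNyzs _ _]].
rewrite e_sym exy eyz; split=> //; apply: contraNneq xNyzs => ->.
by rewrite !inE eqxx orbT.
Qed.

Lemma gcycle_branch x s : symmetric e ->
  is_gcycle e s -> x \in s -> exists y z, [/\ e x y, e x z & y != z].
Proof.
move=> e_sym s_cycle /rot_to[i s' s_rot].
have : is_gcycle e (x :: s') by rewrite -s_rot /is_gcycle size_rot rot_uniq rot_cycle.
case: s' {s_rot s_cycle} => [|y [|z t]] /and3P[//= _ xs_uniq].
move=> /and3P[exy _]; rewrite rcons_path => /andP[_ ezx]; exists y, (last z t).
split=> //; first by rewrite e_sym.
by apply: contraTneq xs_uniq => ->; rewrite /= mem_last andbF.
Qed.

Lemma kpvcS k S : 0 < k -> is_kpvc e k S -> is_kpvc e k.+1 S.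
Proof.
move=> k_gt0 /forallP covS; apply/forallP => t; apply/implyP => t_path.
have := covS [tuple of behead t].
case: t t_path => [[|x [|y s]] //= t_size]; first by case: k k_gt0 t_size {covS}.
move=> /gpath_behead; rewrite /is_gpath => -> /= ->; by rewrite orbT.
Qed.

Lemma psi_le_card k S : is_kpvc e k S -> psi e k <= #|S|.
Proof. by move=> covS; apply: bigminn_le; rewrite ?mem_index_enum. Qed.

Lemma psi_le_cardT k : psi e k <= #|T|.
Proof.
rewrite /psi; elim/big_ind: _ => // [a b aT _ | S _]; last exact: max_card.
by rewrite geq_min aT.
Qed.

Lemma leq_psi c k : c <= #|T| ->
  (forall S : {set T}, is_kpvc e k S -> c <= #|S|) -> c <= psi e k.
Proof.
move=> cT covS; rewrite /psi; elim/big_ind: _ => //.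
by move=> a b ca cb; rewrite leq_min ca cb.
Qed.

Lemma psiS_le k : 0 < k -> psi e k.+1 <= psi e k.
Proof.
move=> k_gt0; apply: leq_psi; first exact: psi_le_cardT.
by move=> S /(kpvcS k_gt0); apply: psi_le_card.
Qed.

Lemma psi_antitone j k : 0 < j -> j <= k -> psi e k <= psi e j.
Proof.
case: j k => [|j] [|k] // _; rewrite ltnS.
apply: (@homo_leq _ (fun i => psi e i.+1) (fun a b => b <= a)) => //.
  by move=> y x z yx zy; apply: leq_trans yx.
by move=> i; apply: psiS_le.
Qed.

Lemma psi1 : psi e 1 = #|T|.
Proof.
apply/eqP; rewrite eqn_leq psi_le_cardT; apply: leq_psi => // S /forallP covS.
rewrite -cardsT subset_leq_card //; apply/subsetP => x _.
by have := covS [tuple x]; rewrite /= orbF.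
Qed.

Lemma psi_eq0 k : (forall t : k.-tuple T, ~~ is_gpath e t) -> psi e k = 0.
Proof.
move=> no_path; apply/eqP; rewrite -leqn0 -(cards0 T); apply: psi_le_card.
by apply/forallP => t; rewrite (negbTE (no_path t)).
Qed.

Lemma psi_gt0 k (t : k.-tuple T) : is_gpath e t -> 0 < psi e k.
Proof.
move=> t_path; apply: leq_psi => [|S /forallP/(_ t)]; last first.
  by rewrite t_path => /hasP[x _ xS]; apply/card_gt0P; exists x.
by case: t t_path => [[|x s] _] //= _; apply/card_gt0P; exists x.
Qed.

Lemma psi_gt1 k (s t : k.-tuple T) :
  is_gpath e s -> is_gpath e t -> [disjoint s & t] -> 1 < psi e k.
Proof.
move=> s_path t_path st_disj.
have meets_both (A : {set T}) : has (mem A) s -> has (mem A) t -> 1 < #|A|.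
  move=> /hasP[x xs xA] /hasP[y yt yA]; apply/card_gt1P; exists x, y.
  by split=> //; apply: contraTneq yt => <-; rewrite (disjointFr st_disj xs).
apply: leq_psi => [|S /forallP covS]; last first.
  by apply: meets_both; [move: (covS s) | move: (covS t)]; rewrite ?s_path ?t_path.
have has_setT (u : seq T) : is_gpath e u -> has (mem [set: T]) u.
  by case: u => // x u _; rewrite /= in_setT.
by rewrite -cardsT; apply: meets_both; apply: has_setT.
Qed.

Lemma psi_squeeze c i j k : 0 < j -> j <= i <= k ->
  psi e j <= c -> c <= psi e k -> psi e i = c.
Proof.
move=> j_gt0 /andP[ji ik] psij_le psik_ge; apply/eqP.
rewrite eqn_leq (leq_trans (psi_antitone j_gt0 ji) psij_le).
by rewrite (leq_trans psik_ge) // psi_antitone // (leq_trans j_gt0 ji).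
Qed.
End PathsAndCovers.

Lemma uniq_size_ord_le n c (s : seq 'I_n) :
  uniq s -> {in s, forall x : 'I_n, x <= c} -> size s <= c.+1.
Proof.
move=> s_uniq s_le; rewrite -(size_map val) -(size_iota 0 c.+1).
apply: uniq_leq_size; first by rewrite (map_inj_uniq val_inj).
by move=> _ /mapP[x xs ->]; rewrite mem_iota ltnS s_le.
Qed.

Definition pvc_tree_edge (p x y : nat) : bool :=
  [|| (x == 0) && ((y == 1) || (y == 2)), (x == 1) && (y == 3),
      (y == 4) && (x == p) | (x == 2) && (5 <= y)].

Definition pvc_tree m p : rel 'I_(7 + m) :=
  fun x y => pvc_tree_edge p x y || pvc_tree_edge p y x.
Arguments pvc_tree : clear implicits.

Section PvcTree.
Variables (m p : nat).
Hypothesis p12 : (p == 1) || (p == 2).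
Local Notation E := (pvc_tree m p).
Local Notation v i := (inord i : 'I_(7 + m)).

Lemma pvc_tree_sym : symmetric E.
Proof. by move=> x y; rewrite /pvc_tree orbC. Qed.

Lemma pvc_tree_irr : irreflexive E.
Proof. by move=> x; rewrite /pvc_tree /pvc_tree_edge; move: p12; lia. Qed.

Lemma inord_eqE i j : i <= 6 + m -> j <= 6 + m -> (v i == v j) = (i == j).
Proof. by move=> im jm; rewrite -val_eqE /= !inordK. Qed.

Lemma pvc_tree_inord i j : i <= 6 + m -> j <= 6 + m ->
  E (v i) (v j) = pvc_tree_edge p i j || pvc_tree_edge p j i.
Proof. by move=> im jm; rewrite /pvc_tree !inordK. Qed.

Lemma pvc_tree_hub x y :
  E x y -> [|| x == 1 :> nat, x == 2 :> nat, y == 1 :> nat | y == 2 :> nat].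
Proof. by rewrite /pvc_tree /pvc_tree_edge; move: p12; lia. Qed.

Lemma pvc_tree_branch x y z : E x y -> E x z -> y != z -> x <= 2.
Proof. by rewrite /pvc_tree /pvc_tree_edge -val_eqE /=; move: p12; lia. Qed.

Lemma pvc_tree_spine x y :
  E x y -> x <= 2 -> y <= 2 -> (x == 0 :> nat) || (y == 0 :> nat).
Proof. by rewrite /pvc_tree /pvc_tree_edge; move: p12; lia. Qed.

Lemma gpath_inner_spine x y z s : is_gpath E [:: x, y, z & s] -> y <= 2.
Proof. by case/(gpath_inner pvc_tree_sym) => /pvc_tree_branch; apply. Qed.

Lemma gpath_meet12 s : 1 < size s -> is_gpath E s -> has (mem [set v 1; v 2]) s.
Proof.
case: s => [|x [|y s]] //= _ /andP[/andP[/pvc_tree_hub exy _] _].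
by rewrite !in_set2 -!val_eqE /= !inordK //; move: exy; lia.
Qed.

Lemma gpath_meet0 s : 3 < size s -> is_gpath E s -> v 0 \in s.
Proof.
case: s => [|x1 [|x2 [|x3 [|x4 s]]]] //= _ x_path.
have x2_le := gpath_inner_spine x_path.
have x3_le := gpath_inner_spine (gpath_behead x_path).
have [_ e23 _] := gpath_inner pvc_tree_sym x_path.
have := pvc_tree_spine e23 x2_le x3_le.
by rewrite !inE -!val_eqE /= inordK // => /orP[] /eqP ->; rewrite eqxx ?orbT.
Qed.

Lemma no_gpath6 s : 5 < size s -> ~~ is_gpath E s.
Proof.
case: s => [|x1 [|x2 [|x3 [|x4 [|x5 [|x6 s]]]]]] //= _; apply/negP => x_path.
have x2_path := gpath_behead x_path; have x3_path := gpath_behead x2_path.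
have x4_path := gpath_behead x3_path.
suff: size [:: x2; x3; x4; x5] <= 3 by [].
apply: (uniq_size_ord_le (take_uniq 4 (andP x2_path).2)) => x.
rewrite !inE => /or4P[] /eqP->; apply: gpath_inner_spine;
  [exact: x_path | exact: x2_path | exact: x3_path | exact: x4_path].
Qed.

Lemma pvc_tree_acyclic : acyclic_graph E.
Proof.
move=> s; apply/negP => s_cycle; have /and3P[s_size s_uniq s_cyc] := s_cycle.
have s_spine : {in s, forall x : 'I_(7 + m), x <= 2}.
  move=> x /(gcycle_branch pvc_tree_sym s_cycle) [y [z [exy exz yz]]].
  exact: pvc_tree_branch exy exz yz.
have := uniq_size_ord_le s_uniq s_spine.
case: s {s_cycle} s_size s_uniq s_cyc s_spine => [|a [|b [|c [|d t]]]] //= _.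
rewrite !inE -!val_eqE /= => abc_uniq /and4P[eab ebc eca _] abc_spine _.
have a_le : a <= 2 by apply: abc_spine; rewrite !inE eqxx.
have b_le : b <= 2 by apply: abc_spine; rewrite !inE eqxx orbT.
have c_le : c <= 2 by apply: abc_spine; rewrite !inE eqxx !orbT.
have := pvc_tree_spine eab a_le b_le; have := pvc_tree_spine ebc b_le c_le.
have := pvc_tree_spine eca c_le a_le; move: abc_uniq; lia.
Qed.

Lemma pvc_tree_connected : connected_graph E.
Proof.
have to0 x : connect E x (v 0).
  have : [|| x == 0 :> nat, E x (v 0), E x (v 1) | E x (v 2)].
    by rewrite /pvc_tree !inordK // /pvc_tree_edge; move: p12; lia.
  have e10 : E (v 1) (v 0) by rewrite pvc_tree_inord.
  have e20 : E (v 2) (v 0) by rewrite pvc_tree_inord.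
  case/or4P => [/eqP x0 | /connect1 // | ex1 | ex2].
  - suff -> : x = v 0 by apply: connect0.
    by apply: val_inj; rewrite /= inordK // x0.
  - exact: connect_trans (connect1 ex1) (connect1 e10).
  - exact: connect_trans (connect1 ex2) (connect1 e20).
by move=> x y; rewrite (connect_trans (to0 x)) // (sym_connect_sym pvc_tree_sym).
Qed.

Lemma pvc_tree_is_tree : is_tree E.
Proof.
split; first by split; [exact: pvc_tree_sym | exact: pvc_tree_irr].
by split; [exact: pvc_tree_connected | exact: pvc_tree_acyclic].
Qed.

Lemma pvc_tree_psi2_le : psi E 2 <= 2.
Proof.
apply: leq_trans (psi_le_card (S := [set v 1; v 2]) _) _.
  by apply/forallP => t; apply/implyP; apply: gpath_meet12; rewrite size_tuple.
by rewrite cards2 ltnS leq_b1.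
Qed.

Lemma pvc_tree_psi3_gt1 : 1 < psi E 3.
Proof.
apply: (psi_gt1 (s := [tuple v 3; v 1; v 0]) (t := [tuple v 5; v 2; v 6])).
- by rewrite /is_gpath /= !pvc_tree_inord // !inE !inord_eqE.
- by rewrite /is_gpath /= !pvc_tree_inord // !inE !inord_eqE.
- by rewrite disjoint_has /= !inE !inord_eqE.
Qed.

Lemma pvc_tree_psi4_le : psi E 4 <= 1.
Proof.
apply: leq_trans (psi_le_card (S := [set v 0]) _) _; last by rewrite cards1.
apply/forallP => t; apply/implyP => /(gpath_meet0 _) t0; apply/hasP.
by exists (v 0); rewrite ?in_set1 // t0 ?size_tuple.
Qed.

Lemma pvc_tree_psi5_gt0 : 0 < psi E 5.
Proof.
apply: (psi_gt0 (t := [tuple v 3; v 1; v 0; v 2; v 5])).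
by rewrite /is_gpath /= !pvc_tree_inord // !inE !inord_eqE.
Qed.

Lemma psi_pvc_tree k : 0 < k ->
  psi E k = if k == 1 then 7 + m else if k <= 3 then 2 else if k <= 5 then 1 else 0.
Proof.
move=> k_gt0; case: ifP => [/eqP-> | /negbT k_neq1]; first by rewrite psi1 card_ord.
have k_gt1 : 1 < k by rewrite ltn_neqAle eq_sym k_neq1.
case: leqP => [k_le3 | k_gt3].
  by apply: psi_squeeze pvc_tree_psi2_le pvc_tree_psi3_gt1; rewrite ?k_gt1.
case: leqP => [k_le5 | k_gt5].
  by apply: psi_squeeze pvc_tree_psi4_le pvc_tree_psi5_gt0; rewrite ?k_gt3.
by apply: psi_eq0 => t; apply: no_gpath6; rewrite size_tuple.
Qed.
End PvcTree.

Definition has_pendant_P3 (T : finType) (e : rel T) : Prop :=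
  exists x y z, [/\ e x y, e y z, forall w, e z w -> w = y
                & forall w, e y w -> w = x \/ w = z].

Lemma isomorphic_pendant_P3 (T1 T2 : finType) (e1 : rel T1) (e2 : rel T2) :
  isomorphic e1 e2 -> has_pendant_P3 e1 -> has_pendant_P3 e2.
Proof.
case=> f [[g fK gK] f_edge] [x [y [z [exy eyz z_leaf y_deg2]]]].
exists (f x), (f y), (f z); split; rewrite -?f_edge //.
  by move=> w; rewrite -[w]gK -f_edge => /z_leaf ->.
by move=> w; rewrite -[w]gK -f_edge => /y_deg2 [->|->]; [left|right].
Qed.

Lemma pvc_tree2_pendant m : has_pendant_P3 (pvc_tree m 2).
Proof.
exists (inord 0), (inord 1), (inord 3); split; rewrite ?pvc_tree_inord //.
  move=> w; rewrite /pvc_tree inordK // => w1.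
  by apply: val_inj; rewrite /= inordK //; move: w1; rewrite /pvc_tree_edge; lia.
move=> w; rewrite /pvc_tree inordK // => w_adj.
have : w = 0 :> nat \/ w = 3 :> nat by move: w_adj; rewrite /pvc_tree_edge; lia.
by case=> w_val; [left|right]; apply: val_inj; rewrite /= inordK.
Qed.

Lemma pvc_tree1_no_pendant m : ~ has_pendant_P3 (pvc_tree m 1).
Proof.
move=> [x [y [z [_ eyz z_leaf y_deg2]]]].
(* Here 0 is the only vertex of degree two, and its neighbours 1 and 2 are not
   leaves. *)
have z_leaf' i : i <= 6 + m -> pvc_tree_edge 1 z i || pvc_tree_edge 1 i z -> i = y.
  move=> im zi; have := z_leaf (inord i); rewrite /pvc_tree inordK // => /(_ zi).
  by move/(congr1 val); rewrite /= inordK.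
have y_deg2' i :
    i <= 6 + m -> pvc_tree_edge 1 y i || pvc_tree_edge 1 i y -> i = x \/ i = z.
  move=> im yi; have := y_deg2 (inord i); rewrite /pvc_tree inordK // => /(_ yi).
  by case=> /(congr1 val); rewrite /= inordK // => ->; [left|right].
have := z_leaf' 0 isT; have := z_leaf' 3 isT; have := z_leaf' 5 isT.
have := y_deg2' 0 isT; have := y_deg2' 3 isT; have := y_deg2' 4 isT.
have := y_deg2' 5 isT; have := y_deg2' 6 isT.
by move: eyz; rewrite /pvc_tree /pvc_tree_edge; lia.
Qed.

Theorem mainTheorem8 (n : nat) (hn : 7 <= n) :
  exists e1 e2 : rel 'I_n,
    [/\ is_tree e1, is_tree e2,
        (forall k, 1 <= k <= n -> psi e1 k = psi e2 k)
      & ~ isomorphic e1 e2].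
Proof.
have [m ->] : exists m, n = 7 + m by exists (n - 7); rewrite subnKC.
exists (pvc_tree m 2), (pvc_tree m 1); split.
- exact: pvc_tree_is_tree.
- exact: pvc_tree_is_tree.
- by move=> k /andP[k_gt0 _]; rewrite !psi_pvc_tree.
- move=> iso; apply: (@pvc_tree1_no_pendant m).
  exact: isomorphic_pendant_P3 iso (pvc_tree2_pendant m).
Qed.
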